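(* Let $\mu>0$ and $\rho>0$ and $s\in\mathbb{R}^m$ be fixed. Then (1) $F(\cdot,s;\mu,\rho)$ is twice differentiable with respect to $x$, and $$\nabla_xF(x,s;\mu,\rho)=\nabla f(x)-\rho\nabla c(x)y,\qquad \nabla_x^2F(x,s;\mu,\rho)=\Big(\nabla^2 f(x)-\rho\sum_{i=1}^m y_i\nabla^2 c_i(x)\Big)+\rho\sum_{i=1}^m\frac{y_i}{z_i+y_i}\nabla c_i(x)\nabla c_i(x)^T,$$ where $y=y(x,s;\mu,\rho)$, $z=z(x,s;\mu,\rho)$; (2) if $f$ and $-c_i$ ($i=1,\dots,m$) are convex on $\mathbb{R}^n$, then $F(\cdot,s;\mu,\rho)$ is convex on $\mathbb{R}^n$.
   Context: Let $f:\mathbb{R}^n\to\mathbb{R}$ and $c=(c_1,\dots,c_m):\mathbb{R}^n\to\mathbb{R}^m$ be twice continuously differentiable; $\nabla c(x)\in\mathbb{R}^{n\times m}$ denotes the matrix whose $i$-th column is $\nabla c_i(x)$. For parameters $\mu>0$, $\rho>0$ and variables $x\in\mathbb{R}^n$, $s\in\mathbb{R}^m$, define for $i=1,\dots,m$: $z_i(x,s;\mu,\rho)=\frac{1}{2\rho}\big(\sqrt{(s_i-\rho c_i(x))^2+4\rho\mu}-(s_i-\rho c_i(x))\big)$, $y_i(x,s;\mu,\rho)=\frac{1}{2\rho}\big(\sqrt{(s_i-\rho c_i(x))^2+4\rho\mu}+(s_i-\rho c_i(x))\big)$, $h_i(x,s;\mu,\rho)=-\mu\ln z_i(x,s;\mu,\rho)+\frac{\rho}{2}y_i(x,s;\mu,\rho)^2-\frac{1}{2\rho}s_i^2$,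 and the augmented Lagrangian $F(x,s;\mu,\rho)=f(x)+\sum_{i=1}^m h_i(x,s;\mu,\rho)$. We abbreviate $z_i,y_i$ when arguments are clear, and write $z=(z_i)$, $y=(y_i)$, $Z=\mathrm{diag}(z)$, $Y=\mathrm{diag}(y)$. *)

From HB Require Import structures.
From mathcomp Require Import all_boot all_order all_algebra.
From mathcomp Require Import all_classical all_reals all_analysis.
Set Implicit Arguments. Unset Strict Implicit. Unset Printing Implicit Defensive.
Import Order.TTheory GRing.Theory Num.Theory.
Import numFieldNormedType.Exports.
Local Open Scope ring_scope.

Definition grad (R : realType) (n : nat) (g : 'cV[R]_n -> R) (x : 'cV[R]_n)
  : 'cV[R]_n := \col_(i < n) ('d g x (delta_mx i 0)).

Definition hess (R : realType) (n : nat) (g : 'cV[R]_n -> R) (x : 'cV[R]_n)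
  : 'M[R]_n := \matrix_(i < n, j < n) ('d (grad g) x (delta_mx j 0) i 0).

Definition C2 (R : realType) (n : nat) (g : 'cV[R]_n -> R) : Prop :=
  (forall x, differentiable g x) /\ (forall x, differentiable (grad g) x) /\
  continuous (hess g).

(* nabla c(x) : the n x m matrix whose i-th column is grad c_i(x) *)
Definition jacT (R : realType) (n m : nat) (c : 'I_m -> 'cV[R]_n -> R)
  (x : 'cV[R]_n) : 'M[R]_(n, m) := \matrix_(k < n, i < m) grad (c i) x k 0.

Section AL.
Variables (R : realType) (n m : nat) (f : 'cV[R]_n -> R)
  (c : 'I_m -> 'cV[R]_n -> R) (s : 'cV[R]_m) (mu rho : R).

Definition zf (x : 'cV[R]_n) (i : 'I_m) : R :=
  (2 * rho)^-1 * (Num.sqrt ((s i 0 - rho * c i x) ^+ 2 + 4 * rho * mu)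
                  - (s i 0 - rho * c i x)).

Definition yf (x : 'cV[R]_n) (i : 'I_m) : R :=
  (2 * rho)^-1 * (Num.sqrt ((s i 0 - rho * c i x) ^+ 2 + 4 * rho * mu)
                  + (s i 0 - rho * c i x)).

Definition hf (x : 'cV[R]_n) (i : 'I_m) : R :=
  - mu * ln (zf x i) + rho / 2 * (yf x i) ^+ 2 - (2 * rho)^-1 * (s i 0) ^+ 2.

Definition ALF (x : 'cV[R]_n) : R := f x + \sum_(i < m) hf x i.

Definition yvec (x : 'cV[R]_n) : 'cV[R]_m := \col_(i < m) yf x i.
End AL.

From HB Require Import structures.
From mathcomp Require Import all_boot all_order all_algebra.
From mathcomp Require Import all_classical all_reals all_analysis.
From mathcomp Require Import ring lra.
Set Implicit Arguments. Unset Strict Implicit. Unset Printing Implicit Defensive.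
Import Order.TTheory GRing.Theory Num.Theory.
Import numFieldNormedType.Exports.
Local Open Scope classical_set_scope.
Local Open Scope ring_scope.
Local Open Scope convex_scope.

(* Each h_i is h(c_i x) for a scalar function h with h' = -rho y and
   y' = -y/(z + y), so the chain rule gives the gradient and the Hessian.
   Because rho y z = mu, the gap between h and its tangent line reduces to
   mu (z_b/z_a - 1 - ln (z_b/z_a)) plus a square, so h is convex; it is
   nonincreasing since y > 0, hence h o c_i is convex when c_i is concave. *)

(* [yf], [zf] and [hf] of the definitions are [yt], [zt] and [ht] at
   [sigma = s_i] and [t = c_i x]. *)
Section Scalar.
Variables (R : realType) (mu rho : R).
Hypotheses (mu_gt0 : 0 < mu) (rho_gt0 : 0 < rho).
Variable sigma : R.

Definition wt (t : R) := sigma - rho * t.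
Definition rt (t : R) := Num.sqrt (wt t ^+ 2 + 4 * rho * mu).
Definition yt (t : R) := (2 * rho)^-1 * (rt t + wt t).
Definition zt (t : R) := (2 * rho)^-1 * (rt t - wt t).
Definition ht (t : R) :=
  - mu * ln (zt t) + rho / 2 * yt t ^+ 2 - (2 * rho)^-1 * sigma ^+ 2.

Let rho_neq0 : rho != 0. Proof. by rewrite gt_eqF. Qed.
Let rad_gt0 t : 0 < wt t ^+ 2 + 4 * rho * mu.
Proof. by rewrite ltr_wpDl ?sqr_ge0 // !mulr_gt0. Qed.

Lemma rt_gt0 t : 0 < rt t.
Proof. by rewrite sqrtr_gt0. Qed.

Let rt_neq0 t : rt t != 0. Proof. by rewrite gt_eqF ?rt_gt0. Qed.

Lemma rt_sqr t : rt t ^+ 2 = wt t ^+ 2 + 4 * rho * mu.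
Proof. by rewrite sqr_sqrtr // ltW. Qed.

Lemma norm_wt_lt_rt t : `|wt t| < rt t.
Proof. by rewrite /rt -sqrtr_sqr ltr_sqrt // ltrDl !mulr_gt0. Qed.

Lemma zt_gt0 t : 0 < zt t.
Proof.
have := norm_wt_lt_rt t; rewrite ltr_norml => /andP[_ ?].
by rewrite mulr_gt0 ?invr_gt0 ?mulr_gt0 //; lra.
Qed.

Lemma yt_gt0 t : 0 < yt t.
Proof.
have := norm_wt_lt_rt t; rewrite ltr_norml => /andP[? _].
by rewrite mulr_gt0 ?invr_gt0 ?mulr_gt0 //; lra.
Qed.

Lemma wt_yz t : wt t = rho * (yt t - zt t).
Proof. by rewrite /yt /zt; field. Qed.

Lemma rt_yz t : rt t = rho * (zt t + yt t).
Proof. by rewrite /yt /zt; field. Qed.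

Lemma mul_yzt t : rho * yt t * zt t = mu.
Proof.
have e : (rt t - wt t) * (rt t + wt t) = 4 * rho * mu.
  by rewrite -subr_sqr rt_sqr; ring.
rewrite /yt /zt.
transitivity (rho * (2 * rho)^-1 * (2 * rho)^-1 * ((rt t - wt t) * (rt t + wt t))).
  by ring.
by rewrite e; field.
Qed.

Lemma is_derive_wt t : is_derive t (1 : R) wt (- rho).
Proof. by apply: is_derive_eq; rewrite /GRing.scale /=; ring. Qed.
#[local] Existing Instance is_derive_wt.

Lemma is_derive_rt t : is_derive t (1 : R) rt (- rho * wt t / rt t).
Proof.
have dsq : is_derive t (1 : R) (fun t => wt t ^+ 2 + 4 * rho * mu) (- 2 * rho * wt t).
  by apply: is_derive_eq; rewrite /GRing.scale /=; ring.
have d := @is_derive1_comp _ Num.sqrt (fun t => wt t ^+ 2 + 4 * rho * mu) t _ _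
  (is_derive1_sqrt (rad_gt0 t)) dsq.
by apply: is_derive_eq; rewrite -/(rt t); field.
Qed.
#[local] Existing Instance is_derive_rt.

Lemma is_derive_yt t : is_derive t (1 : R) yt (- (yt t / (zt t + yt t))).
Proof.
apply: is_derive_eq; rewrite /GRing.scale /= -[zt t + yt t](mulKf rho_neq0) -rt_yz.
by rewrite /yt; field; rewrite ?rho_neq0 ?rt_neq0.
Qed.

#[local] Existing Instance is_derive_yt.

Lemma is_derive_zt t : is_derive t (1 : R) zt (rho * zt t / rt t).
Proof.
by apply: is_derive_eq; rewrite /GRing.scale /= /zt; field; rewrite ?rho_neq0 ?rt_neq0.
Qed.

Lemma is_derive_ht t : is_derive t (1 : R) ht (- rho * yt t).
Proof.
have dlnz := is_derive1_comp (is_derive1_ln (zt_gt0 t)) (is_derive_zt t).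
apply: is_derive_eq; rewrite /GRing.scale /= rt_yz -{1}(mul_yzt t).
by field; rewrite ?rho_neq0 ?gt_eqF ?addr_gt0 ?zt_gt0 ?yt_gt0.
Qed.

Lemma ht_supporting_line a b : ht a + (- rho * yt a) * (b - a) <= ht b.
Proof.
have za := zt_gt0 a; have zb := zt_gt0 b; have ya := yt_gt0 a.
have ln_ratio : ln (zt b) - ln (zt a) <= zt b / zt a - 1.
  rewrite -ln_div ?posrE // -[X in ln X](subrK 1) addrC le_ln1Dx //.
  by rewrite ltrBrDr addrC subrr divr_gt0.
have mu_ratio : mu * (zt b / zt a) = rho * yt a * zt b.
  by rewrite -(mul_yzt a); field; rewrite gt_eqF.
have sq_ge0 : 0 <= rho / 2 * (yt a - yt b) ^+ 2.
  by rewrite mulr_ge0 ?sqr_ge0 ?divr_ge0 ?ltW.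
have slope : (- rho * yt a) * (b - a) = yt a * (wt b - wt a) by rewrite /wt; ring.
rewrite /ht slope !wt_yz.
have := mul_yzt a; have : mu * (ln (zt b) - ln (zt a)) <= mu * (zt b / zt a - 1).
  by rewrite ler_pM2l.
nra.
Qed.
End Scalar.

Section SupportingLines.
Variables (R : realFieldType) (H d : R -> R).
Hypothesis H_supporting : forall a b, H a + d a * (b - a) <= H b.

Lemma supporting_line_convex : convex_function [set: R^o] H.
Proof.
move=> t a b _ _.
have l0 : 0 <= t%:num by apply: ge0.
have l1 : 0 <= 1 - t%:num by rewrite subr_ge0; apply: le1.
set l := t%:num in l0 l1 *; set p := l * a + (1 - l) * b.
change (H p <= l * H a + (1 - l) * H b).
have := ler_wpM2l l0 (H_supporting p a).
have := ler_wpM2l l1 (H_supporting p b).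
rewrite /p; lra.
Qed.

Lemma supporting_line_nonincr : (forall a, d a <= 0) -> {homo H : a b /~ a <= b}.
Proof.
move=> d_le0 a b ba; have := H_supporting a b.
have : 0 <= d a * (b - a) by rewrite mulr_le0 // subr_le0.
lra.
Qed.
End SupportingLines.

Section ConvexFunctions.
Variables (R : realFieldType) (E : lmodType R).
Implicit Type D : set (convex_lmodType E).

Lemma convex_functionD D (f g : E -> R) :
  convex_function D f -> convex_function D g ->
  convex_function D (fun x => f x + g x).
Proof.
move=> cf cg t x y xD yD; have := cf t x y xD yD; have := cg t x y xD yD.
rewrite !convRE; lra.
Qed.

Lemma convex_function_sum D m (F : 'I_m -> E -> R) :
  (forall i, convex_function D (F i)) -> convex_function D (fun x => \sum_i F i x).
Proof.
move=> cF t x y xD yD; rewrite convRE !mulr_sumr -big_split /=.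
by apply: ler_sum => i _; rewrite -convRE; apply: cF.
Qed.

Lemma convex_function_comp_concave (g : E -> R) (H : R -> R) :
  {homo H : a b /~ a <= b} -> convex_function [set: R^o] H ->
  convex_function [set: E] (fun x => - g x) ->
  convex_function [set: E] (fun x => H (g x)).
Proof.
move=> H_nonincr cH cg t x y _ _; apply: le_trans (cH t _ _ (mem_setT _) (mem_setT _)).
apply: H_nonincr; have := cg t x y (mem_setT _) (mem_setT _).
set gxy := (X in _ -> X <= _); have -> : gxy = (g x : R^o) <| t |> g y by [].
by rewrite !convRE; lra.
Qed.
End ConvexFunctions.

Section Differentials.
Variables (R : numFieldType) (V W : normedModType R).

Lemma is_diff_sum m (f df : 'I_m -> V -> W) x :
  (forall i, is_diff x (f i) (df i)) ->
  is_diff x (fun y => \sum_i f i y) (fun v => \sum_i df i v).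
Proof.
move=> dfi; have : is_diff x (\sum_i f i) (\sum_i df i).
  by elim/big_rec2: _ => [|i F dF _ dFx]; [exact: is_diff_cst | exact: is_diffD].
by rewrite !fct_sumE.
Qed.

Lemma is_diff_comp_derive (g : V -> R) (H : R -> R) (dg : V -> R) (d : R) x :
  is_diff x g dg -> is_derive (g x) (1 : R) H d ->
  is_diff x (fun y => H (g y)) (fun v => dg v * d).
Proof.
move=> dgx dH; have g_diff : differentiable g x by exact: ex_diff.
have H_diff : differentiable H (g x) by apply/derivable1_diffP; case: dH.
apply: DiffDef; first exact: differentiable_comp.
rewrite (diff_comp g_diff H_diff) deriv1E; last by case: dH.
by apply/funext => v /=; rewrite diff_val derive1E derive_val.
Qed.
End Differentials.

Section MatrixValued.
Variables (R : numFieldType) (V : normedModType R) (p q : nat).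

Definition mxcoord (i : 'I_p) (j : 'I_q) (M : 'M[R]_(p, q)) : R := M i j.

Lemma mxcoord_is_linear i j : linear (mxcoord i j).
Proof. by move=> a M N; rewrite /mxcoord !mxE. Qed.

HB.instance Definition _ i j :=
  GRing.isLinear.Build R 'M[R]_(p, q) R *:%R (mxcoord i j) (mxcoord_is_linear i j).

Lemma is_diff_mxE (G dG : V -> 'M[R]_(p, q)) x i j :
  is_diff x G dG -> is_diff x (fun y => G y i j) (fun v => dG v i j).
Proof.
move=> dGx; have cont : continuous (mxcoord i j) by apply: coord_continuous.
have : is_diff (G x) (mxcoord i j) (mxcoord i j).
  by apply: DiffDef; [exact: linear_differentiable | exact: diff_lin].
exact: is_diff_comp.
Qed.

Lemma diff_mxE (G : V -> 'M[R]_(p, q)) x i j v :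
  differentiable G x -> 'd (fun y => G y i j) x v = 'd G x v i j.
Proof.
by move=> dG; rewrite (diff_val (is_diff_def := is_diff_mxE i j (differentiableP dG))).
Qed.

Lemma differentiable_mx (G : V -> 'M[R]_(p, q)) x :
  (forall i j, differentiable (fun y => G y i j) x) -> differentiable G x.
Proof.
move=> dG; have -> : G = fun y => \sum_i \sum_j G y i j *: delta_mx i j.
  by apply/funext => y; rewrite {1}[G y]matrix_sum_delta.
have dGij i j : is_diff x (fun y => G y i j *: delta_mx i j) _ :=
  differentiableP (differentiableZl (delta_mx i j) (dG i j)).
exact: (ex_diff (is_diff_def := is_diff_sum (fun i => is_diff_sum (dGij i)))).
Qed.
End MatrixValued.

Section AugmentedLagrangian.
Variables (R : realType) (n m : nat) (f : 'cV[R]_n -> R)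
  (c : 'I_m -> 'cV[R]_n -> R) (s : 'cV[R]_m) (mu rho : R).
Hypotheses (mu_gt0 : 0 < mu) (rho_gt0 : 0 < rho).

Local Notation F := (ALF f c s mu rho).
Local Notation Y := (yf c s mu rho).
Local Notation Z := (zf c s mu rho).

Lemma ALFE : F = fun x => f x + \sum_i ht mu rho (s i 0) (c i x).
Proof. by []. Qed.

Lemma ALF_convex : convex_function [set: 'cV[R]_n] f ->
  (forall i, convex_function [set: 'cV[R]_n] (fun x => - c i x)) ->
  convex_function [set: 'cV[R]_n] F.
Proof.
move=> cf cc; rewrite ALFE; apply: convex_functionD => //.
apply: convex_function_sum => i.
pose slope t := - rho * yt mu rho (s i 0) t.
have supp a b : ht mu rho (s i 0) a + slope a * (b - a) <= ht mu rho (s i 0) b.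
  exact: ht_supporting_line.
apply: convex_function_comp_concave => //; last exact: supporting_line_convex supp.
apply: supporting_line_nonincr supp _ => t.
by rewrite /slope mulNr oppr_le0 mulr_ge0 ?ltW ?yt_gt0.
Qed.

Hypotheses (f_diff : forall x, differentiable f x)
  (c_diff : forall i x, differentiable (c i) x).

Lemma is_diff_ALF x :
  is_diff x F (fun v => 'd f x v - rho * \sum_i Y x i * 'd (c i) x v).
Proof.
have dh i := is_diff_comp_derive (differentiableP (c_diff i x))
  (is_derive_ht mu_gt0 rho_gt0 (s i 0) (c i x)).
have dF : is_diff x F (('d f x : 'cV_n -> R) + fun v =>
    \sum_i 'd (c i) x v * (- rho * yt mu rho (s i 0) (c i x))) :=
  is_diffD (differentiableP (f_diff x)) (is_diff_sum dh).
apply: is_diff_eq dF _; apply/funext => v /=.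
rewrite mulr_sumr -sumrN; congr (_ + _).
by apply: eq_bigr => i _; rewrite mulrC !mulNr -mulrA.
Qed.

Lemma grad_ALF x : grad F x = grad f x - rho *: (jacT c x *m yvec c s mu rho x).
Proof.
apply/matrixP => k l; rewrite !mxE (diff_val (is_diff_def := is_diff_ALF x)) /=.
by congr (_ - _ * _); apply: eq_bigr => i _; rewrite !mxE mulrC.
Qed.

Lemma grad_ALF_coord x k :
  grad F x k 0 = grad f x k 0 - rho * \sum_i grad (c i) x k 0 * Y x i.
Proof.
rewrite grad_ALF !mxE; congr (_ - _ * _).
by apply: eq_bigr => i _; rewrite !mxE.
Qed.

Hypotheses (grad_f_diff : forall x, differentiable (grad f) x)
  (grad_c_diff : forall i x, differentiable (grad (c i)) x).

Lemma is_diff_grad_ALF_coord x k :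
  is_diff x (fun y => grad F y k 0) (fun v => 'd (grad f) x v k 0 - rho *
    \sum_i (grad (c i) x k 0 * ('d (c i) x v * - (Y x i / (Z x i + Y x i)))
             + Y x i * 'd (grad (c i)) x v k 0)).
Proof.
have dgc i := is_diff_mxE k 0 (differentiableP (grad_c_diff i x)).
have dY i := is_diff_comp_derive (differentiableP (c_diff i x))
  (is_derive_yt mu_gt0 rho_gt0 (s i 0) (c i x)).
have dG := is_diffB (is_diff_mxE k 0 (differentiableP (grad_f_diff x)))
  (is_diffZ rho (is_diff_sum (fun i => is_diffM (dgc i) (dY i)))).
by rewrite (funext (grad_ALF_coord ^~ k)).
Qed.

Lemma differentiable_grad_ALF x : differentiable (grad F) x.
Proof.
apply: differentiable_mx => k l; rewrite (ord1 l).
exact: (ex_diff (is_diff_def := is_diff_grad_ALF_coord x k)).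
Qed.

Lemma hess_ALF x : hess F x =
  (hess f x - rho *: \sum_i Y x i *: hess (c i) x)
  + rho *: \sum_i (Y x i / (Z x i + Y x i)) *: (grad (c i) x *m (grad (c i) x)^T).
Proof.
apply/matrixP => k j; rewrite [LHS]mxE.
rewrite -diff_mxE; last exact: differentiable_grad_ALF.
rewrite (diff_val (is_diff_def := is_diff_grad_ALF_coord x k)) /=.
rewrite !(mxE, summxE) !mulr_sumr -!sumrN -addrA -big_split /=; congr (_ + _).
apply: eq_bigr => i _; rewrite !mxE big_ord1 !mxE; ring.
Qed.
End AugmentedLagrangian.

Theorem lemma2p4 (R : realType) (n m : nat) (f : 'cV[R]_n -> R)
  (c : 'I_m -> 'cV[R]_n -> R) (mu rho : R) (s : 'cV[R]_m) :
  C2 f -> (forall i, C2 (c i)) -> 0 < mu -> 0 < rho ->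
  (forall x : 'cV[R]_n,
     differentiable (ALF f c s mu rho) x /\
     differentiable (grad (ALF f c s mu rho)) x /\
     grad (ALF f c s mu rho) x
       = grad f x - rho *: (jacT c x *m yvec c s mu rho x) /\
     hess (ALF f c s mu rho) x
       = (hess f x - rho *: \sum_(i < m) yf c s mu rho x i *: hess (c i) x)
         + rho *: \sum_(i < m)
             (yf c s mu rho x i / (zf c s mu rho x i + yf c s mu rho x i))
               *: (grad (c i) x *m (grad (c i) x)^T)) /\
  (convex_function setT f ->
   (forall i, convex_function setT (fun x => - c i x)) ->
   convex_function setT (ALF f c s mu rho)).
Proof.
move=> [f_diff [grad_f_diff _]] c_C2 mu_gt0 rho_gt0.
have c_diff i x : differentiable (c i) x by case: (c_C2 i).
have grad_c_diff i x : differentiable (grad (c i)) x by case: (c_C2 i) => _ [].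
split=> [x|]; last exact: ALF_convex.
have F_diff := is_diff_ALF s mu_gt0 rho_gt0 f_diff c_diff x.
split; first exact: (ex_diff (is_diff_def := F_diff)).
split; first exact: differentiable_grad_ALF.
by split; [exact: grad_ALF | exact: hess_ALF].
Qed.
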